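(* For any $k$ and $d$, there exists $m=O(k^2\log k)$ such that for any $d$-dimensional $k$-Fourier-sparse signal $x(t)$, any $t_0\in\mathbb{R}^d_{\ge0}$ and any $\tau\in\mathbb{R}^d_{>0}$, there exist $C_1,\dots,C_m\in\mathbb{C}$ such that $|C_j|\le 11$ for all $j\in[m]$ and $$x(t_0)=\sum_{j\in[m]}C_j\,x(t_0+j\tau).$$
   Context: A $d$-dimensional $k$-Fourier-sparse signal is a function $x:\mathbb{R}^d\to\mathbb{C}$ of the form $x(t)=\sum_{i=1}^k v_ie^{2\pi i\langle f_i,t\rangle}$ with $v_i\in\mathbb{C}$, $f_i\in\mathbb{R}^d$. *)

From HB Require Import structures.
From mathcomp Require Import all_boot all_order all_algebra.
From mathcomp Require Import complex.
From mathcomp Require Import reals exp trigo.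
Set Implicit Arguments. Unset Strict Implicit. Unset Printing Implicit Defensive.
Import Order.TTheory GRing.Theory Num.Theory.
Local Open Scope ring_scope.
Local Open Scope complex_scope.

Definition expi (R : realType) (theta : R) : R[i] := (cos theta +i* sin theta).

Definition dotR (R : realType) (d : nat) (u v : 'rV[R]_d) : R :=
  \sum_(l < d) u 0 l * v 0 l.

Definition fsignal (R : realType) (d k : nat) (v : 'I_k -> R[i])
  (f : 'I_k -> 'rV[R]_d) (t : 'rV[R]_d) : R[i] :=
  \sum_(i < k) v i * expi (2 * pi * dotR (f i) t).

Definition k_Fourier_sparse (R : realType) (d k : nat) (x : 'rV[R]_d -> R[i]) : Prop :=
  exists (v : 'I_k -> R[i]) (f : 'I_k -> 'rV[R]_d), x = fsignal v f.

From HB Require Import structures.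
From mathcomp Require Import all_boot all_order all_algebra.
From mathcomp Require Import complex.
From mathcomp Require Import reals sequences exp trigo.
From mathcomp Require Import ring lra zify.
Set Implicit Arguments. Unset Strict Implicit. Unset Printing Implicit Defensive.
Import Order.TTheory GRing.Theory Num.Theory.
Local Open Scope ring_scope.
Local Open Scope complex_scope.

(* Write x(t0 + n tau) = sum_i w_i z_i^n with |z_i| = 1.  If a polynomial P of degree at
   most m has P(0) = 1 and P(z_i) = 0 for all i, then C_j := -P_j satisfies
   sum_j C_j z_i^j = 1 for every i, hence x(t0) = sum_j C_j x(t0 + j tau).  Take
   P = prod_i (1 - X/z_i) sum_(n<D) (a X/z_i)^n: on the unit circle each factor has modulus
   at most 2 (1 + a^D) / (1 + a), and by Fourier inversion at the N-th roots of unity the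
   coefficients of a polynomial are bounded by its maximum modulus on the unit circle.
   With a = k/(k+1) and D = k L where 2k <= 2^L <= 4k, the product of the k factor bounds
   is at most (1 + 1/(2k))^(2k) <= e <= 4, and the degree is k D = O(k^2 log k). *)

Section PrimitiveRootDFT.
Variable F : numFieldType.

Lemma norm_prim_root N (w : F) : N.-primitive_root w -> `|w| = 1.
Proof.
move=> prim_w; apply/eqP.
by rewrite -(pexpr_eq1 (prim_order_gt0 prim_w)) // -normrX prim_expr_order ?normr1.
Qed.

Lemma sum_expr_prim_root N (w : F) e : N.-primitive_root w ->
  \sum_(l < N) (w ^+ e) ^+ l = if (N %| e)%N then N%:R else 0.
Proof.
move=> prim_w; case: ifP => [|/negbT]; rewrite (prim_order_dvd prim_w) => we1.
  rewrite (eq_bigr (fun=> 1)) ?sumr_const ?card_ord // => l _.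
  by rewrite (eqP we1) expr1n.
have weN : (w ^+ e) ^+ N = 1 by rewrite -exprM mulnC exprM (prim_expr_order prim_w) expr1n.
have /eqP : (w ^+ e - 1) * \sum_(l < N) (w ^+ e) ^+ l = 0 by rewrite -subrX1 weN subrr.
by rewrite mulf_eq0 subr_eq0 (negbTE we1) => /eqP.
Qed.

Lemma dvdn_addBn_eq N i j : (i < N)%N -> (j < N)%N -> (N %| i + (N - j))%N = (i == j).
Proof.
move=> iN jN; apply/idP/eqP => [|->]; last by rewrite subnKC ?dvdnn // ltnW.
case/dvdnP => q Eq; have : (0 < q < 2)%N by apply/andP; split; nia.
by case: q Eq => [|[|]] //= Eq _; lia.
Qed.

Lemma sum_horner_prim_root N (w : F) (p : {poly F}) j :
  N.-primitive_root w -> (size p <= N)%N -> (j < N)%N ->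
  \sum_(l < N) p.[w ^+ l] * w ^+ (l * (N - j)) = N%:R * p`_j.
Proof.
move=> prim_w sp jN.
have inner (i : 'I_N) : \sum_(l < N) p`_i * (w ^+ l) ^+ i * w ^+ (l * (N - j)) =
    p`_i * (if i == j :> nat then N%:R else 0).
  rewrite -(dvdn_addBn_eq (ltn_ord i) jN) -(sum_expr_prim_root _ prim_w) mulr_sumr.
  by apply: eq_bigr => l _; rewrite -mulrA -!exprM -exprD -mulnDr mulnC.
under eq_bigr do rewrite (horner_coef_wide _ sp) mulr_suml.
rewrite exchange_big /=; under eq_bigr do rewrite inner.
rewrite (bigD1 (Ordinal jN)) //= eqxx big1 ?addr0 1?mulrC // => i ij.
by rewrite ifN ?mulr0 //; apply: contra ij => /eqP ij; apply/eqP/val_inj.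
Qed.

Lemma norm_coef_le_prim_root N (w : F) (p : {poly F}) (B : F) :
  N.-primitive_root w -> (size p <= N)%N ->
  (forall l : 'I_N, `|p.[w ^+ l]| <= B) -> forall j, (j < N)%N -> `|p`_j| <= B.
Proof.
move=> prim_w sp pB j jN.
have N_gt0 : (0 : F) < N%:R by rewrite ltr0n (prim_order_gt0 prim_w).
rewrite -(ler_pM2l N_gt0) -[X in X * `|_|]normr_nat -normrM.
rewrite -(sum_horner_prim_root prim_w sp jN).
have -> : N%:R * B = \sum_(l < N) B by rewrite sumr_const card_ord mulr_natl.
apply: le_trans (ler_norm_sum _ _ _) (ler_sum _ _) => l _.
by rewrite normrM normrX (norm_prim_root prim_w) expr1n mulr1.
Qed.

End PrimitiveRootDFT.

Section PolyCoef.
Variable F : nzRingType.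

Lemma size_prod_leq_const k n (P : 'I_k -> {poly F}) :
  (forall i, (size (P i) <= n.+1)%N) -> (size (\prod_(i < k) P i)%R <= (k * n).+1)%N.
Proof.
elim: k P => [|k IHk] P sizeP; first by rewrite big_ord0 size_poly1.
rewrite big_ord_recr /=; apply: leq_trans (size_polyMleq _ _) _.
have := IHk (fun i => P (widen_ord (leqnSn k) i)) (fun i => sizeP _).
have := sizeP ord_max; rewrite mulSn; move: (size _) (size _) => s1 s2; lia.
Qed.

Lemma horner_subr_coef0 (p : {poly F}) m x : (size p <= m.+1)%N ->
  p.[x] - p`_0 = \sum_(j < m) p`_j.+1 * x ^+ j.+1.
Proof. by move=> sp; rewrite (horner_coef_wide x sp) big_ord_recl expr0 mulr1 addrC addKr. Qed.

End PolyCoef.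

Section DampedFilter.
Variable R : rcfType.
Implicit Types (a : R) (c u : R[i]).

Lemma norm_1B_le_damped u a : `|u| = 1 -> 0 <= a < 1 ->
  `|1 - u| <= (2 / (1 + a))%:C * `|1 - a%:C * u|.
Proof.
case: u => x y; rewrite !normc_def /= => /(congr1 (@complex.Re R)) /= nu /andP[a_ge0 a_lt1].
have hxy : x ^+ 2 + y ^+ 2 = 1.
  by rewrite -[LHS]sqr_sqrtr ?nu ?expr1n // addr_ge0 // sqr_ge0.
rewrite -rmorphM lecR /=.
have r0 : 0 <= 2 / (1 + a) by apply: divr_ge0; lra.
rewrite -[X in X * _](ger0_norm r0) -sqrtr_sqr -sqrtrM ?sqr_ge0 //.
rewrite ler_sqrt; last by rewrite mulr_ge0 ?addr_ge0 ?sqr_ge0.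
rewrite !mul0r !subr0 !addr0 sub0r sqrrN.
have a1_gt0 : 0 < 1 + a by lra.
rewrite expr_div_n mulrAC ler_pdivlMr ?exprn_gt0 //.
(* After squaring, the two sides differ by 2 (1 - a)^2 (1 + Re u). *)
have : 0 <= (1 - a) ^+ 2 * (1 + x) by apply: mulr_ge0; [apply: sqr_ge0 | nra].
nra.
Qed.

Lemma norm_damped_geometric_le u a D : `|u| = 1 -> 0 <= a < 1 ->
  `|(1 - u) * \sum_(n < D) (a%:C * u) ^+ n| <= (2 / (1 + a) * (1 + a ^+ D))%:C.
Proof.
move=> nu a01; have a_ge0 : 0 <= a by case/andP: a01.
have telescope : (1 - a%:C * u) * \sum_(n < D) (a%:C * u) ^+ n = 1 - (a%:C * u) ^+ D.
  by rewrite -[1 - _]opprB mulNr -subrX1 opprB.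
have norm_tail : `|1 - (a%:C * u) ^+ D| <= (1 + a ^+ D)%:C.
  apply: le_trans (ler_normB _ _) _.
  by rewrite normr1 normrX normrM nu mulr1 ger0_norm ?ler0c // rmorphD rmorph1 rmorphXn.
rewrite normrM rmorphM /=.
apply: le_trans (ler_wpM2r (normr_ge0 _) (norm_1B_le_damped nu a01)) _.
rewrite -mulrA -normrM telescope ler_wpM2l // ler0c divr_ge0 //; lra.
Qed.

Definition damped_filter a D c : {poly R[i]} :=
  (1 - c *: 'X) * \poly_(n < D) ((a%:C * c) ^+ n).

Lemma horner_damped_filter a D c x :
  (damped_filter a D c).[x] = (1 - c * x) * \sum_(n < D) (a%:C * (c * x)) ^+ n.
Proof.
rewrite /damped_filter hornerM horner_poly !hornerE.
by congr (_ * _); apply: eq_bigr => n _; rewrite -exprMn.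
Qed.

Lemma size_damped_filter a D c : (size (damped_filter a D c) <= D.+1)%N.
Proof.
apply: leq_trans (size_polyMleq _ _) _.
have size_lin : (size (1 - c *: 'X : {poly R[i]})%R <= 2)%N.
  by rewrite (leq_trans (size_polyD _ _)) // size_poly1 size_polyN geq_max /=
    (leq_trans (size_scale_leq _ _)) // size_polyX.
move: size_lin (size_poly D (fun n => (a%:C * c) ^+ n)).
move: (size _) (size _) => s1 s2; lia.
Qed.

Lemma damped_filter0 a D c : (0 < D)%N -> (damped_filter a D c).[0] = 1.
Proof.
case: D => // D _; rewrite horner_damped_filter !mulr0 subr0 mul1r big_ord_recl.
by rewrite expr0 big1 ?addr0 // => n _; rewrite exprS mul0r.
Qed.

Lemma damped_filter_root a D c : c != 0 -> (damped_filter a D c^-1).[c] = 0.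
Proof. by move=> c_neq0; rewrite horner_damped_filter mulVf // subrr mul0r. Qed.

Lemma norm_damped_filter_le a D c u : `|c| = 1 -> `|u| = 1 -> 0 <= a < 1 ->
  `|(damped_filter a D c).[u]| <= (2 / (1 + a) * (1 + a ^+ D))%:C.
Proof.
move=> nc nu a01; rewrite horner_damped_filter.
by apply: norm_damped_geometric_le a01; rewrite normrM nc nu mulr1.
Qed.

End DampedFilter.

Section UnitCircle.
Variable R : realType.

Lemma expiD (a b : R) : expi (a + b) = expi a * expi b.
Proof. by rewrite /expi cosD sinD; simpc; congr (_ +i* _); ring. Qed.

Lemma expiMn (a : R) n : expi (a *+ n) = expi a ^+ n.
Proof.
elim: n => [|n IHn]; first by rewrite /expi cos0 sin0.
by rewrite mulrS expiD IHn exprS.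
Qed.

Lemma norm_expi (a : R) : `|expi a| = 1.
Proof. by rewrite /expi normc_def /= cos2Dsin2 sqrtr1. Qed.

Lemma cos_lt1 (t : R) : 0 < t < pi *+ 2 -> cos t < 1.
Proof.
move=> /andP[t_gt0 t_lt2pi]; rewrite [t]splitr -mulr2n cos_mulr2n cos2sin2.
have : 0 < sin (t / 2) by apply: sin_gt0_pi; apply/andP; split; lra.
nra.
Qed.

Lemma expi_prim_root N : (0 < N)%N -> N.-primitive_root (expi (pi *+ 2 / N%:R : R)).
Proof.
move=> N_gt0; have N_neq0 : N%:R != 0 :> R by rewrite pnatr_eq0 -lt0n.
have expiN : expi (pi *+ 2 / N%:R : R) ^+ N = 1.
  by rewrite -expiMn -[_ *+ N]mulr_natr divfK // /expi cos2pi sin2pi.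
have [M prim_M M_dvd_N] := prim_order_exists N_gt0 expiN.
have M_gt0 := prim_order_gt0 prim_M.
suff M_eq_N : M = N by rewrite M_eq_N in prim_M.
apply/eqP; rewrite eqn_leq dvdn_leq //= leqNgt; apply/negP => M_lt_N.
have := prim_expr_order prim_M; rewrite -expiMn /expi => -[/eqP].
rewrite lt_eqF // cos_lt1 //.
have pi2_gt0 : (0 : R) < pi *+ 2 by rewrite mulr2n; have := pi_gt0 R; lra.
rewrite -[_ *+ M]mulr_natr mulrAC; apply/andP; split.
  by rewrite divr_gt0 ?mulr_gt0 ?ltr0n.
by rewrite ltr_pdivrMr ?ltr0n // ltr_pM2l // ltr_nat.
Qed.

Lemma norm_coef_le_unit_circle (p : {poly R[i]}) (B : R[i]) :
  (forall u : R[i], `|u| = 1 -> `|p.[u]| <= B) -> forall j, `|p`_j| <= B.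
Proof.
move=> pB j; set N := (size p + j).+1.
apply: (norm_coef_le_prim_root (expi_prim_root (ltn0Sn _ : 0 < N)%N)) => [|l|].
- by rewrite /N ltnW // ltnS leq_addr.
- by apply: pB; rewrite normrX norm_expi expr1n.
- by rewrite /N ltnS leq_addl.
Qed.

Lemma unit_circle_annihilator k D (a : R) (z : 'I_k -> R[i]) :
  (0 < D)%N -> 0 <= a < 1 -> (forall i, `|z i| = 1) ->
  exists C : 'I_(k * D) -> R[i],
    (forall j, `|C j| <= ((2 / (1 + a) * (1 + a ^+ D)) ^+ k)%:C) /\
    (forall i, \sum_(j < k * D) C j * z i ^+ j.+1 = 1).
Proof.
move=> D_gt0 a01 nz; set P := \prod_(i < k) damped_filter a D (z i)^-1.
have sizeP : (size P <= (k * D).+1)%N.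
  by apply: size_prod_leq_const => i; apply: size_damped_filter.
have P0 : P`_0 = 1.
  by rewrite -horner_coef0 horner_prod big1 // => i _; apply: damped_filter0.
exists (fun j => - P`_j.+1); split=> [j | i].
  rewrite normrN; apply: norm_coef_le_unit_circle => u nu.
  rewrite horner_prod normr_prod rmorphXn -[k in _ ^+ k]card_ord -prodr_const.
  apply: ler_prod => i _; rewrite normr_ge0 norm_damped_filter_le //.
  by rewrite normfV nz invr1.
have zi_neq0 : z i != 0 by rewrite -normr_eq0 nz oner_eq0.
under eq_bigr do rewrite mulNr.
rewrite sumrN -horner_subr_coef0 // P0 horner_prod (bigD1 i) //=.
by rewrite damped_filter_root // mul0r sub0r opprK.
Qed.

End UnitCircle.

Section Numerics.
Variable R : realType.

Lemma bernoulli_ineq (x : R) n : -1 <= x -> 1 + x *+ n <= (1 + x) ^+ n.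
Proof.
move=> x_geN1; elim: n => [|n IHn]; first by rewrite mulr0n expr0 addr0.
rewrite exprSr mulrSr.
have x1_ge0 : 0 <= 1 + x by lra.
apply: le_trans (ler_wpM2r x1_ge0 IHn).
have : 0 <= x *+ n * x by rewrite -mulr_natl -mulrA mulr_ge0 // sqr_ge0.
nra.
Qed.

Lemma exprn_1Dx_le_expR (x : R) n : -1 <= x -> (1 + x) ^+ n <= expR (x *+ n).
Proof.
move=> x_geN1; rewrite -mulr_natl expRM_natl.
by apply: lerXn2r; rewrite ?nnegrE ?expR_ge0 ?expR_ge1Dx //; lra.
Qed.

Lemma expR_half_le2 : expR (2^-1 : R) <= 2.
Proof.
have := expR_ge1Dx (- 2^-1 : R); have := expRxMexpNx_1 (2^-1 : R).
have := expR_gt0 (2^-1 : R); nra.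
Qed.

Lemma ratio_expn_le (k L : nat) : (0 < k)%N -> (2 * k <= 2 ^ L)%N ->
  (k%:R / (k%:R + 1) : R) ^+ (k * L) <= (2 * k%:R)^-1.
Proof.
move=> k_gt0 kL; set K : R := k%:R; have K_gt0 : 0 < K by rewrite ltr0n.
have -> : K / (K + 1) = (1 + K^-1)^-1 by field; apply/andP; split; lra.
have Kinv_gt0 : 0 < K^-1 by rewrite invr_gt0.
have K1_gt0 : 0 < 1 + K^-1 by lra.
rewrite exprVn lef_pV2 ?posrE ?exprn_gt0 ?mulr_gt0 // exprM.
have two_le : 2 <= (1 + K^-1) ^+ k.
  have := @bernoulli_ineq K^-1 k; rewrite -[K^-1 *+ k]mulr_natr mulVf ?gt_eqF //.
  by apply; rewrite (le_trans _ (ltW Kinv_gt0)) ?lerN10.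
have : (2 * k)%:R <= (2 ^ L)%:R :> R by rewrite ler_nat.
rewrite natrM natrX -/K => le2k; apply: le_trans le2k _.
by apply: lerXn2r; rewrite ?nnegrE ?exprn_ge0 // ltW.
Qed.

Lemma damped_filter_gain_le4 (k L : nat) (a : R) : (0 < k)%N -> (2 * k <= 2 ^ L)%N ->
  a = k%:R / (k%:R + 1) -> (2 / (1 + a) * (1 + a ^+ (k * L))) ^+ k <= 4.
Proof.
move=> k_gt0 kL ->; set K : R := k%:R; have K_gt0 : 0 < K by rewrite ltr0n.
set x := (2 * K)^-1; have x_gt0 : 0 < x by rewrite invr_gt0 mulr_gt0.
have gain_le : 2 / (1 + K / (K + 1)) <= 1 + x.
  have -> : 2 / (1 + K / (K + 1)) = 1 + (2 * K + 1)^-1.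
    by field; apply/andP; split; lra.
  by rewrite lerD2l lef_pV2 ?posrE; lra.
have tail_le := ratio_expn_le k_gt0 kL; rewrite -/K -/x in tail_le.
have tail_ge0 : 0 <= (K / (K + 1)) ^+ (k * L) by rewrite exprn_ge0 // divr_ge0; lra.
have gain_ge0 : 0 <= 2 / (1 + K / (K + 1)) by rewrite divr_ge0 // addr_ge0 // divr_ge0; lra.
have factor_le : 2 / (1 + K / (K + 1)) * (1 + (K / (K + 1)) ^+ (k * L)) <= (1 + x) ^+ 2.
  by rewrite expr2 ler_pM //; lra.
apply: (@le_trans _ _ (((1 + x) ^+ 2) ^+ k)).
  by apply: lerXn2r factor_le; rewrite nnegrE ?mulr_ge0 ?exprn_ge0 //; lra.
rewrite -exprM mulnC exprM.
have -> : 4 = 2 ^+ 2 :> R by rewrite expr2; lra.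
apply: lerXn2r; rewrite ?nnegrE ?exprn_ge0 //; first lra.
apply: le_trans (exprn_1Dx_le_expR _ _) _; first lra.
by rewrite -[x *+ k]mulr_natr /x invfM -mulrA mulVf ?gt_eqF // mulr1 expR_half_le2.
Qed.

Lemma trunc_log2_scale k : (0 < k)%N ->
  (2 * k <= 2 ^ (trunc_log 2 k + 2) <= 4 * k)%N.
Proof.
move=> k_gt0; have := trunc_logP (isT : (1 < 2)%N) k_gt0.
have := trunc_log_ltn k (isT : (1 < 2)%N).
rewrite expnD expnS; move: (2 ^ _)%N => p; lia.
Qed.

Lemma sample_count_le (k L : nat) : (0 < k)%N -> (2 ^ L <= 4 * k)%N ->
  (k * (k * L))%:R <= 3 / ln 2 * (k%:R ^+ 2 * ln (k%:R + 1)) :> R.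
Proof.
move=> k_gt0 Lk; have ln2_gt0 : (0 : R) < ln 2 by rewrite ln_gt0 // ltr1n.
have k1_gt0 : (0 : R) < k%:R + 1 by rewrite ltr_wpDl.
have : (2 : R) ^+ L <= (k%:R + 1) ^+ 3.
  by rewrite natr1 -!natrX ler_nat (leq_trans Lk) //; nia.
rewrite -ler_ln ?posrE ?exprn_gt0 // !lnXn // -[_ *+ L]mulr_natr -[_ *+ 3]mulr_natr => L_le.
rewrite natrM natrM mulrA -expr2 mulrCA ler_pM2l ?exprn_gt0 ?ltr0n //.
by rewrite mulrAC ler_pdivlMr //; lra.
Qed.

End Numerics.

Lemma sum_eq_combination (F : comNzRingType) k m (w z : 'I_k -> F) (C : 'I_m -> F) :
  (forall i, \sum_(j < m) C j * z i ^+ j.+1 = 1) ->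
  \sum_(i < k) w i = \sum_(j < m) C j * \sum_(i < k) w i * z i ^+ j.+1.
Proof.
move=> Cz; under [RHS]eq_bigr do rewrite mulr_sumr.
rewrite exchange_big; apply: eq_bigr => i _.
by rewrite -[LHS]mulr1 -(Cz i) mulr_sumr; apply: eq_bigr => j _; rewrite mulrCA.
Qed.

Section Signal.
Variable R : realType.

Lemma dotR_shift d (f t0 tau : 'rV[R]_d) n :
  dotR f (t0 + n%:R *: tau) = dotR f t0 + dotR f tau *+ n.
Proof.
rewrite /dotR -sumrMnl -big_split; apply: eq_bigr => l _.
by rewrite !mxE mulrDr mulrCA mulr_natl.
Qed.

Lemma fsignal_shift d k (v : 'I_k -> R[i]) (f : 'I_k -> 'rV[R]_d)
    (t0 tau : 'rV[R]_d) n :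
  fsignal v f (t0 + n%:R *: tau) =
  \sum_(i < k) v i * expi (2 * pi * dotR (f i) t0) * expi (2 * pi * dotR (f i) tau) ^+ n.
Proof.
apply: eq_bigr => i _.
by rewrite dotR_shift mulrDr expiD [2 * pi * (_ *+ n)]mulrnAr expiMn mulrA.
Qed.

End Signal.

Theorem lemma5p4 (R : realType) :
  exists c : R, 0 < c /\
  forall k d : nat, exists m : nat,
    (m%:R <= c * ((k%:R) ^+ 2 * ln (k%:R + 1)) :> R) /\
    forall (x : 'rV[R]_d -> R[i]), k_Fourier_sparse k x ->
    forall t0 tau : 'rV[R]_d,
      (forall l, 0 <= t0 0 l) -> (forall l, 0 < tau 0 l) ->
      exists C : 'I_m -> R[i],
        (forall j, `|C j| <= 11) /\
        x t0 = \sum_(j < m) C j * x (t0 + (j.+1)%:R *: tau).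
Proof.
exists (3 / ln 2); split=> [|k d]; first by rewrite divr_gt0 // ln_gt0 // ltr1n.
have [-> | k_gt0] := posnP k.
  exists 0%N; split=> [|x [v [f ->]] t0 tau _ _]; first by rewrite expr0n /= mul0r mulr0.
  by exists (fun=> 0); split=> [j|]; rewrite ?normr0 /fsignal ?big_ord0.
set L := (trunc_log 2 k + 2)%N; have /andP[kL Lk] := trunc_log2_scale k_gt0.
exists (k * (k * L))%N; split=> [|x [v [f ->]] t0 tau _ _]; first exact: sample_count_le.
set a : R := k%:R / (k%:R + 1).
have a01 : 0 <= a < 1.
  have K_gt0 : (0 : R) < k%:R by rewrite ltr0n.
  by rewrite divr_ge0 ?ltr_pdivrMr /=; lra.
have kL_gt0 : (0 < k * L)%N by rewrite muln_gt0 k_gt0 /L addn2.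
have [C [C_le C_comb]] :=
  unit_circle_annihilator kL_gt0 a01 (fun i => norm_expi (2 * pi * dotR (f i) tau)).
exists C; split=> [j|].
  apply: le_trans (C_le j) _; rewrite -[11](rmorph_nat (@real_complex R)) lecR.
  by apply: le_trans (damped_filter_gain_le4 k_gt0 kL erefl) _; lra.
under [RHS]eq_bigr do rewrite fsignal_shift.
exact: (sum_eq_combination (fun i => v i * expi (2 * pi * dotR (f i) t0)) C_comb).
Qed.
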